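(* There are constants $\delta,c>0$ depending only on the predicate $\psi$ such that if $\mathcal{C}=\{C_1,\dots,C_m\}$ is a random Additive-CSP($\psi$) instance with $n$ variables and $m=cn$ constraints, then with probability $1-o(1)$, $\mathrm{GI}(G_{\mathcal{C}},G_{\mathcal{C}^0})<1-\delta$.
   Context: $H$ is a finite abelian group, $k\ge3$, $\psi\subseteq H^k$ a balanced pairwise independent subgroup (proper subgroup of $H^k$; for $a$ uniform in $\psi$ each coordinate uniform on $H$, any two coordinates independent). An instance has constraints $\psi(x_{j_1}+a_1,\dots,x_{j_k}+a_k)=1$ on distinct variables, $a_i\in H$; $\mathcal{C}^0$ sets all $a_i=0$. A random instance with $m$ constraints picks each constraint independently: an ordered $k$-tuple of distinct variables uniformly among the $\binom{n}{k}k!$ possibilities and each $a_i$ uniform in $H$. Variable gadget $\Gamma_x$: fix $H=\mathbb{Z}_{p_1}\oplus\dots\oplus\mathbb{Z}_{p_t}$ with $p_i\ge2$; vertices $x\mapsto b$, $b\in H$. An $i$-row is a set of $p_i$ elements of $H$ agreeing in all coordinates except the $i$-th. Row part (only if $t>1$): for every $i$ and $i$-row $R$, add a new vertex $w_R$ adjacent to all $x\mapsto b$, $b\in R$, and $i$ new vertices each adjacent only to $w_R$. Cycle part: for every $i$ and $i$-row $R$: if $p_i=2$ add an edge between its two vertices; if $p_i\ge3$, write $R=\{r_0,\dots,r_{p_i-1}\}$ with $r_j$ having $i$-th coordinate $j$, and for each $j\in\mathbb{Z}_{p_i}$ add the edge $\{x\mapsto r_j,x\mapsto r_{j+1}\}$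 and two new vertices $u,v$ with edges $\{u,x\mapsto r_j\},\{u,x\mapsto r_{j+1}\},\{u,v\},\{v,x\mapsto r_{j+1}\}$. Graph $G_{\mathcal{C}}$: one copy of $\Gamma_{x_j}$ per variable; for each constraint $C_i$ on $(x_{j_1},\dots,x_{j_k})$, constraint vertices, one per assignment $\alpha$ satisfying $C_i$ (not shared between constraints), forming a clique, with each $\alpha$ adjacent to $x_{j_l}\mapsto\alpha(x_{j_l})$. $\mathrm{GI}(G,G')=\max_\pi\frac{|\{e\in E(G):\pi(e)\in E(G')\}|}{\max\{|E(G)|,|E(G')|\}}$ over bijections $\pi$. *)

From HB Require Import structures.
From mathcomp Require Import all_boot all_order all_algebra all_fingroup.
From mathcomp Require Import reals.
Set Implicit Arguments. Unset Strict Implicit. Unset Printing Implicit Defensive.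
Import Order.TTheory GRing.Theory Num.Theory.

Definition Hgrp (t : nat) (p : 'I_t -> nat) : finType :=
  {dffun forall i : 'I_t, 'Z_(p i)}.

Section Group.
Variables (t : nat) (p : 'I_t -> nat).
Local Notation H := (Hgrp p).

Definition Hzero : H := @finfun _ (fun i => 'Z_(p i)) (fun i => 0%R).
Definition Hadd (f g : H) : H :=
  @finfun _ (fun i => 'Z_(p i)) (fun i => (f i + g i)%R).
Definition Hopp (f : H) : H := @finfun _ (fun i => 'Z_(p i)) (fun i => (- f i)%R).
Definition Hsub (f g : H) : H := Hadd f (Hopp g).

Definition Hincr (i : 'I_t) (r : H) : H :=
  @finfun _ (fun j => 'Z_(p j)) (fun j => if j == i then (r j + 1)%R else r j).

Definition same_row (i : 'I_t) (r r' : H) : bool :=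
  [forall j, (j != i) ==> (r j == r' j)].

Variable k : nat.
Definition Ktup := {ffun 'I_k -> H}.
Definition Kzero : Ktup := [ffun _ => Hzero].
Definition Kadd (s s' : Ktup) : Ktup := [ffun l => Hadd (s l) (s' l)].
Definition Kopp (s : Ktup) : Ktup := [ffun l => Hopp (s l)].

Definition is_subgroup (psi : {set Ktup}) : Prop :=
  [/\ Kzero \in psi,
      (forall s s', s \in psi -> s' \in psi -> Kadd s s' \in psi) &
      (forall s, s \in psi -> Kopp s \in psi)].

(* for a uniform in psi, each coordinate is uniform on H *)
Definition balanced (psi : {set Ktup}) : Prop :=
  forall (l : 'I_k) (b : H),
    (#|[set s in psi | s l == b]| * #|[set: H]|)%N = #|psi|.

(* for a uniform in psi, any two coordinates are independent
   (together with balancedness: the pair is uniform on H x H) *)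
Definition pairwise_independent (psi : {set Ktup}) : Prop :=
  forall (l l' : 'I_k) (b b' : H), l != l' ->
    (#|[set s in psi | (s l == b) && (s l' == b')]| * #|[set: H]| ^ 2)%N
      = #|psi|.

Variables (n m : nat).
(* a constraint: an ordered k-tuple of variables and the shifts a_1..a_k *)
Definition constr := ({ffun 'I_k -> 'I_n} * {ffun 'I_k -> H})%type.
Definition instance := {ffun 'I_m -> constr}.

Definition valid_instance (I : instance) : bool :=
  [forall c, injectiveb (I c).1].

Definition zero_instance (I : instance) : instance :=
  [ffun c => ((I c).1, Kzero)].

(* X (x,b)        : vertex  x |-> b of the gadget of variable x
   W (x,i,b)      : vertex  w_R of the i-row R containing b (b i = 0)
   P (x,i,b,j)    : pendant vertices of w_R, j <= i (so i.+1 of them, the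
                    0-indexed coordinate i being the paper's (i+1)-th)
   U (x,i,r,f)    : cycle-part vertices u (f = false) / v (f = true) for the
                    pair (r_j, r_{j+1}) = (r, Hincr i r), when p_i >= 3
   C (c,s)        : constraint vertex of constraint c for the satisfying
                    assignment alpha with alpha(x_{j_l}) = s_l - a_l, s in psi *)
Definition Vraw : finType :=
  (('I_n * H) + ('I_n * 'I_t * H) + ('I_n * 'I_t * H * 'I_t)
   + ('I_n * 'I_t * H * bool) + ('I_m * Ktup))%type.

Variable psi : {set Ktup}.

Definition valid_vertex (v : Vraw) : bool :=
  match v with
  | inl (inl (inl (inl _))) => true
  | inl (inl (inl (inr (x, i, b)))) => (1 < t)%N && (b i == 0%R)
  | inl (inl (inr (x, i, b, j)))   => [&& (1 < t)%N, b i == 0%R & (j <= i)%N]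
  | inl (inr (x, i, r, f))         => (3 <= p i)%N
  | inr (c, s)                     => s \in psi
  end.

Definition Vert : finType := {v : Vraw | valid_vertex v}.

Definition arc (I : instance) (u v : Vraw) : bool :=
  match u, v with
  | inl (inl (inl (inr (x, i, b)))), inl (inl (inl (inl (y, r)))) =>
      (x == y) && same_row i r b
  | inl (inl (inr (x, i, b, j))), inl (inl (inl (inr (y, i', b')))) =>
      [&& x == y, i == i' & b == b']
  | inl (inl (inl (inl (x, r)))), inl (inl (inl (inl (y, r')))) =>
      (x == y) && [exists i, r' == Hincr i r]
  | inl (inr (x, i, r, false)), inl (inl (inl (inl (y, r')))) =>
      (x == y) && ((r' == r) || (r' == Hincr i r))
  | inl (inr (x, i, r, false)), inl (inr (y, i', r', true)) =>
      [&& x == y, i == i' & r == r']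
  | inl (inr (x, i, r, true)), inl (inl (inl (inl (y, r')))) =>
      (x == y) && (r' == Hincr i r)
  | inr (c, s), inr (c', s') => (c == c') && (s != s')
  | inr (c, s), inl (inl (inl (inl (y, r)))) =>
      [exists l, (y == (I c).1 l) && (r == Hsub (s l) ((I c).2 l))]
  | _, _ => false
  end.

Definition adjG (I : instance) : rel Vert :=
  fun u v => arc I (val u) (val v) || arc I (val v) (val u).

End Group.

Definition edges (V : finType) (e : rel V) : {set {set V}} :=
  [set [set x.1; x.2] | x in [set x : V * V | e x.1 x.2]].

Definition preserved (V : finType) (e e' : rel V) (pi : {perm V}) : nat :=
  #|[set E in edges e | [set pi x | x in E] \in edges e']|.

Definition GI (R : numFieldType) (V : finType) (e e' : rel V) : R :=
  ((\max_(pi : {perm V}) preserved e e' pi)%:R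
     / (maxn #|edges e| #|edges e'|)%:R)%R.

Definition GI_instance (R : numFieldType) (t : nat) (p : 'I_t -> nat) (k : nat)
    (psi : {set Ktup p k}) (n m : nat) (I : instance p k n m) : R :=
  GI R (@adjG t p k n m psi I) (@adjG t p k n m psi (zero_instance I)).

(* Probability of an event for the uniformly random instance
   (each constraint independently: uniform ordered k-tuple of distinct
   variables and uniform shifts), i.e. uniform over valid instances. *)
Definition Pr_instance (R : numFieldType) (t : nat) (p : 'I_t -> nat) (k n m : nat)
    (E : instance p k n m -> bool) : R :=
  ((#|[set I : instance p k n m | valid_instance I && E I]|)%:R
     / (#|[set I : instance p k n m | valid_instance I]|)%:R)%R.

From Pilot Require Import Defs.
From mathcomp Require Import all_boot all_order all_algebra all_fingroup.
From mathcomp Require Import reals zify lra.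
Set Implicit Arguments. Unset Strict Implicit. Unset Printing Implicit Defensive.
Import Order.TTheory GRing.Theory Num.Theory.

(* Fix a bijection pi that preserves a 1 - delta fraction of the edges and read
   off an assignment h from it: h x is the value b for which pi (x |-> b) is
   y |-> 0, where y is the variable of pi (x |-> 0).  Call a constraint nice when
   every edge at its clique survives and its clique is sent to constraint
   vertices.  A nice clique is mapped onto the clique of a constraint of C^0, and
   balancedness and pairwise independence of psi force pi to send each variable
   of the constraint to a single variable of the image constraint, so h
   satisfies it.  G_C has O(n + m) edges, so few are lost, and a constraint fails
   to be nice only at a lost edge or at one of the O(n) gadget vertices: for
   m = c n with c large, h satisfies 3/4 of the constraints.  But psi is a
   proper subgroup, so a fixed h satisfies a random constraint with probability
   at most 1/2, and a first moment bound on 2^(#satisfied constraints), summed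
   over the |H|^n assignments, shows that this happens with probability at most
   2^-n. *)

Section Shifts.
Variables (t : nat) (p : 'I_t -> nat) (k : nat).
Local Notation H := (Hgrp p).
Local Notation K := (Ktup p k).

Lemma Hsub_addK (b a : H) : Hsub (Hadd b a) a = b.
Proof. by apply/ffunP=> i; rewrite !ffunE addrK. Qed.

Lemma Hadd_subK (s a : H) : Hadd (Hsub s a) a = s.
Proof. by apply/ffunP=> i; rewrite !ffunE subrK. Qed.

Lemma Hsub0 (r : H) : Hsub r (Hzero p) = r.
Proof. by apply/ffunP=> i; rewrite !ffunE oppr0 addr0. Qed.

Lemma KaddI (b : K) : injective (Kadd b).
Proof.
move=> a1 a2 E; apply/ffunP=> l; apply/ffunP=> i.
by have := congr1 (fun f : K => f l i) E; rewrite !ffunE => /addrI.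
Qed.

Variable psi : {set K}.

Lemma balanced_witness : balanced psi -> Kzero p k \in psi ->
  forall l b, exists2 s, s \in psi & s l = b.
Proof.
move=> bal psi0 l b; have := bal l b.
case: (set_0Vmem [set s in psi | s l == b]) => [->|[s]]; last first.
  by rewrite inE => /andP[Hs /eqP Esl] _; exists s.
by rewrite cards0 mul0n => /esym/eqP; rewrite cards_eq0 => /eqP E0; rewrite E0 inE in psi0.
Qed.

Lemma pairwise_witness : pairwise_independent psi -> Kzero p k \in psi ->
  forall l l' b b', l != l' -> exists2 s, s \in psi & s l = b /\ s l' = b'.
Proof.
move=> pw psi0 l l' b b' ll'; have := pw l l' b b' ll'.
case: (set_0Vmem [set s in psi | (s l == b) && (s l' == b')]) => [->|[s]]; last first.
  by rewrite inE => /and3P[Hs /eqP E1 /eqP E2] _; exists s.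
by rewrite cards0 mul0n => /esym/eqP; rewrite cards_eq0 => /eqP E0; rewrite E0 inE in psi0.
Qed.

(* A proper subgroup and any coset outside it are disjoint of the same size. *)
Lemma proper_subgroup_half : is_subgroup psi -> psi != setT ->
  (2 * #|psi| <= #|{: K}|)%N.
Proof.
case=> _ addK oppK ne.
have [b _ bNpsi] : exists2 b, b \in [set: K] & b \notin psi.
  by apply/subsetPn; move: ne; rewrite eqEsubset subsetT.
have card_coset : #|Kadd b @: psi| = #|psi| by apply/card_imset/KaddI.
have disj : [disjoint psi & Kadd b @: psi].
  apply/pred0P => x /=; apply/negP => /andP[Hx /imsetP [s Hs Ex]].
  have Eb : Kadd x (Kopp s) = b.
    by rewrite Ex; apply/ffunP => l; apply/ffunP => i; rewrite !ffunE addrK.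
  by move: bNpsi; rewrite -Eb addK // oppK.
have := (leq_card_setU psi (Kadd b @: psi)).2; rewrite disj => /eqP E.
by rewrite mul2n -addnn -{2}card_coset -E max_card.
Qed.

End Shifts.

Section Graph.
Variables (t : nat) (p : 'I_t -> nat) (k n m : nat) (psi : {set Ktup p k}).
Local Notation H := (Hgrp p).
Local Notation K := (Ktup p k).
Local Notation V := (Vert n m psi).
Local Notation VR := (Vraw p k n m).

Definition rawX (x : 'I_n) (b : H) : VR := inl (inl (inl (inl (x, b)))).
Definition rawC (c : 'I_m) (s : K) : VR := inr (c, s).
Definition varv (x : 'I_n) (b : H) : V := exist _ (rawX x b) isT.
Definition conv (c : 'I_m) (s : K) (Hs : s \in psi) : V := exist _ (rawC c s) Hs.

Definition is_con (v : VR) : bool := if v is inr _ then true else false.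
Definition con_of (v : VR) : option 'I_m := if v is inr (c, _) then Some c else None.
Definition var_of (v : VR) : option 'I_n :=
  if v is inl (inl (inl (inl (x, _)))) then Some x else None.

Definition in_clique (c : 'I_m) (u : V) : bool := con_of (val u) == Some c.

Definition sat (h : 'I_n -> H) (C : constr p k n) : bool :=
  Kadd [ffun l => h (C.1 l)] C.2 \in psi.

Lemma adjC (I : instance p k n m) (u v : V) : adjG I u v = adjG I v u.
Proof. by rewrite /adjG orbC. Qed.

Lemma adj_conP (I : instance p k n m) (u v : V) c s :
  val u = rawC c s -> adjG I u v ->
  (exists s', val v = rawC c s') \/
  (exists l, val v = rawX ((I c).1 l) (Hsub (s l) ((I c).2 l))).
Proof.
rewrite /adjG => ->.
case: v => [[[[[[y r]|[[y i] b]]|[[[y i] b] j]]|[[[y i] r] [|]]]|[c' s']] Hv] //=;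
  rewrite ?orbF //=.
- by case/existsP => l /andP[/eqP-> /eqP->]; right; exists l.
- by case/orP => /andP[/eqP Ec _]; left; exists s'; rewrite ?Ec.
Qed.

Lemma adj_con_con (I : instance p k n m) (u v : V) c s s' :
  val u = rawC c s -> val v = rawC c s' -> s != s' -> adjG I u v.
Proof. by rewrite /adjG => -> -> /= ->; rewrite eqxx. Qed.

Lemma adj_con_var (I : instance p k n m) (u : V) c s l :
  val u = rawC c s -> adjG I u (varv ((I c).1 l) (Hsub (s l) ((I c).2 l))).
Proof. by rewrite /adjG => -> /=; apply/orP; left; apply/existsP; exists l; rewrite !eqxx. Qed.

Lemma in_cliqueP c (u : V) : reflect (exists2 s, val u = rawC c s & s \in psi) (in_clique c u).
Proof.
apply: (iffP idP) => [|[s Eu _]]; last by rewrite /in_clique Eu eqxx.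
case: u => [[[[[[y r]|[[y i] b]]|[[[y i] b] j]]|[[[y i] r] f]]|[c' s']] Hv] //=.
by rewrite /in_clique /= => /eqP [->]; exists s'.
Qed.

Lemma card_clique c : #|[set u | in_clique c u]| = #|psi|.
Proof.
pose tuple_of (v : VR) : K := if v is inr (_, s) then s else Kzero p k.
have E : tuple_of @: (val @: [set u | in_clique c u]) = psi.
  apply/setP => s; apply/imsetP/idP => [[w /imsetP [u Qu ->] ->]|Hs].
    by move: Qu; rewrite inE => /in_cliqueP [s' -> Hs'].
  by exists (rawC c s) => //; apply/imsetP; exists (conv c Hs); rewrite // inE /in_clique eqxx.
rewrite -[in RHS]E card_in_imset ?card_imset //; first exact: val_inj.
move=> a b /imsetP [u Qu ->] /imsetP [v Qv ->]; move: Qu Qv.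
by rewrite !inE => /in_cliqueP [s -> _] /in_cliqueP [s' -> _] /= ->.
Qed.

Definition read_off (pi : {perm V}) (x : 'I_n) : H :=
  odflt (Hzero p) [pick b | [exists y, (val (pi (varv x b)) == rawX y (Hzero p))
                               && (var_of (val (pi (varv x (Hzero p)))) == Some y)]].

Lemma read_off_eq (pi : {perm V}) x b y :
  val (pi (varv x b)) = rawX y (Hzero p) -> var_of (val (pi (varv x (Hzero p)))) = Some y ->
  read_off pi x = b.
Proof.
move=> Eb Ey; rewrite /read_off; case: pickP => [b' /existsP [y' /andP[/eqP Eb' /eqP]]|N].
  by rewrite Ey => -[Eyy]; move: Eb'; rewrite -Eyy -Eb => /val_inj/perm_inj [].
by have := N b; rewrite Eb Ey; case/existsP; exists y; rewrite !eqxx.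
Qed.

Definition nice (I : instance p k n m) (pi : {perm V}) (c : 'I_m) : bool :=
  [forall u, [forall v, in_clique c u ==> adjG I u v ==>
                        adjG (zero_instance I) (pi u) (pi v)]]
  && [forall u, in_clique c u ==> is_con (val (pi u))].

Section NiceSat.
Variables (I : instance p k n m) (pi : {perm V}) (c : 'I_m).
Hypotheses (VI : valid_instance I) (psi0 : Kzero p k \in psi).
Hypotheses (bal : balanced psi) (pw : pairwise_independent psi) (nice_c : nice I pi c).

Let scopeI c0 : injective (I c0).1.
Proof. by apply/injectiveP; move/forallP: VI; apply. Qed.

Let preserve u v : in_clique c u -> adjG I u v -> adjG (zero_instance I) (pi u) (pi v).
Proof. by case/andP: nice_c => /forallP/(_ u)/forallP/(_ v)/implyP H _ /H/implyP. Qed.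

Let to_con u : in_clique c u -> is_con (val (pi u)).
Proof. by case/andP: nice_c => _ /forallP/(_ u)/implyP. Qed.

Lemma clique_image : exists c', forall u, in_clique c u -> in_clique c' (pi u).
Proof.
set u0 := conv c psi0; have Q0 : in_clique c u0 by rewrite /in_clique eqxx.
case E0: (val (pi u0)) (to_con Q0) => [//|[c' s0]] _; exists c' => u Qu.
case: (eqVneq u u0) => [->|Nu]; first by rewrite /in_clique E0.
have [s Eu _] := in_cliqueP _ _ Qu.
have Ns : s != Kzero p k by apply: contra_neq Nu => Es; apply: val_inj; rewrite Eu Es.
have := preserve Qu (adj_con_con I Eu (erefl : val u0 = rawC c _) Ns); rewrite adjC.
case/(adj_conP E0) => [[s' E]|[l El]]; first by rewrite /in_clique E eqxx.
by have := to_con Qu; rewrite El.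
Qed.

Section Image.
Variable c' : 'I_m.
Hypothesis clique_to : forall u, in_clique c u -> in_clique c' (pi u).

Lemma clique_onto v : in_clique c' v -> exists2 u, in_clique c u & v = pi u.
Proof.
have E : pi @: [set u | in_clique c u] = [set v | in_clique c' v].
  apply/eqP; rewrite eqEcard card_imset; last exact: perm_inj.
  rewrite !card_clique leqnn andbT; apply/subsetP => w /imsetP [u].
  by rewrite !inE => /clique_to Qu ->.
move=> Qv; have : v \in pi @: [set u | in_clique c u] by rewrite E inE.
by case/imsetP => u; rewrite inE => Qu ->; exists u.
Qed.

(* In C^0 all shifts are 0, so the neighbour of a constraint vertex alpha at
   position j is the vertex x'_j |-> alpha_j. *)
Lemma image_neighbour u s s' l : val u = rawC c s -> val (pi u) = rawC c' s' ->
  exists j, val (pi (varv ((I c).1 l) (Hsub (s l) ((I c).2 l))))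
            = rawX ((I c').1 j) (s' j).
Proof.
move=> Eu Epu; have Qu : in_clique c u by rewrite /in_clique Eu.
case: (adj_conP Epu (preserve Qu (adj_con_var I l Eu))) => [[s'' Ev]|[j ->]].
  have /clique_onto [w] : in_clique c' (pi (varv ((I c).1 l) (Hsub (s l) ((I c).2 l)))).
    by rewrite /in_clique Ev.
  by move=> + /perm_inj Ew; rewrite -Ew.
by exists j; rewrite /zero_instance ffunE /= ffunE Hsub0.
Qed.

Lemma image_var_in_scope l b : exists j, var_of (val (pi (varv ((I c).1 l) b))) = Some ((I c').1 j).
Proof.
have [s Hs Esl] := balanced_witness bal psi0 l (Hadd b ((I c).2 l)).
have /in_cliqueP [s' Es' _] := clique_to (u := conv c Hs) (eqxx _).
have [j Ej] := image_neighbour l (erefl : val (conv c Hs) = _) Es'.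
by exists j; move: Ej; rewrite Esl Hsub_addK => ->.
Qed.

Lemma image_var_neq l l' b b' : l != l' ->
  var_of (val (pi (varv ((I c).1 l) b))) != var_of (val (pi (varv ((I c).1 l') b'))).
Proof.
move=> ll'.
have [s Hs [Esl Esl']] := pairwise_witness pw psi0 (Hadd b ((I c).2 l)) (Hadd b' ((I c).2 l')) ll'.
have /in_cliqueP [s' Es' _] := clique_to (u := conv c Hs) (eqxx _).
have [j Ej] := image_neighbour l (erefl : val (conv c Hs) = _) Es'.
have [j' Ej'] := image_neighbour l' (erefl : val (conv c Hs) = _) Es'.
rewrite Esl Hsub_addK in Ej; rewrite Esl' Hsub_addK in Ej'.
rewrite Ej Ej' /=; apply: contra_neq ll' => -[/scopeI Ejj].
by move: Ej'; rewrite -Ejj -Ej => /val_inj/perm_inj/(congr1 val) [/scopeI].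
Qed.

Let vidx_ex l b : exists j, var_of (val (pi (varv ((I c).1 l) b))) == Some ((I c').1 j).
Proof. by have [j ->] := image_var_in_scope l b; exists j. Qed.

Let vidx l b : 'I_k := xchoose (vidx_ex l b).

Let vidxP l b : var_of (val (pi (varv ((I c).1 l) b))) = Some ((I c').1 (vidx l b)).
Proof. exact/eqP/(xchooseP (vidx_ex l b)). Qed.

Let vidx_neq l l' b b' : l != l' -> vidx l b != vidx l' b'.
Proof. by move/(image_var_neq b b'); rewrite !vidxP; apply: contra_neq => ->. Qed.

(* Using b at position l and b' elsewhere gives an injection, hence a
   bijection, of scope positions; the index vidx l b' it must hit can only come
   from position l. *)
Lemma image_var_const l b b' :
  var_of (val (pi (varv ((I c).1 l) b))) = var_of (val (pi (varv ((I c).1 l) b'))).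
Proof.
rewrite !vidxP; pose f l1 := if l1 == l then vidx l b else vidx l1 b'.
have f_neq l1 l2 : l1 != l2 -> f l1 != f l2.
  rewrite /f => N12; case: (eqVneq l1 l) => [E1|N1]; case: (eqVneq l2 l) => [E2|N2].
  - by rewrite E1 E2 eqxx in N12.
  - by apply: vidx_neq; rewrite eq_sym.
  - exact: vidx_neq.
  - exact: vidx_neq.
have f_inj : injective f.
  by move=> l1 l2 E; apply/eqP/negPn/negP => /f_neq; rewrite E eqxx.
have /codomP [l1] := injF_onto f_inj (vidx l b').
rewrite /f; case: (eqVneq l1 l) => [_ -> //|N E].
by have := vidx_neq b' b' N; rewrite -E eqxx.
Qed.

End Image.

Lemma nice_sat : sat (read_off pi) (I c).
Proof.
have [c' clique_to] := clique_image.
have [u Qu Eu] := clique_onto clique_to (v := conv c' psi0) (eqxx _).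
have [s Es Hs] := in_cliqueP _ _ Qu.
have Epu : val (pi u) = rawC c' (Kzero p k) by rewrite -Eu.
rewrite /sat; suff -> : Kadd [ffun l => read_off pi ((I c).1 l)] (I c).2 = s by [].
apply/ffunP => l; rewrite !ffunE.
have [j Ej] := image_neighbour clique_to l Es Epu; rewrite ffunE in Ej.
rewrite (@read_off_eq _ _ (Hsub (s l) ((I c).2 l)) ((I c').1 j)) ?Hadd_subK //.
by rewrite (image_var_const clique_to _ _ (Hsub (s l) ((I c).2 l))) Ej.
Qed.

End NiceSat.
End Graph.

Lemma eq_set2 (T : finType) (a b c d : T) : [set a; b] = [set c; d] ->
  (a = c /\ b = d) \/ (a = d /\ b = c).
Proof.
move=> E.
have /set2P Ha : a \in [set c; d] by rewrite -E set21.
have /set2P Hb : b \in [set c; d] by rewrite -E set22.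
have /set2P Hc : c \in [set a; b] by rewrite E set21.
have /set2P Hd : d \in [set a; b] by rewrite E set22.
by intuition subst; auto.
Qed.

Section Lost.
Variables (t : nat) (p : 'I_t -> nat) (k n m : nat) (psi : {set Ktup p k}).
Variables (I : instance p k n m) (pi : {perm Vert n m psi}).
Local Notation V := (Vert n m psi).
Local Notation G := (@adjG _ _ _ _ _ psi I).
Local Notation G0 := (@adjG _ _ _ _ _ psi (zero_instance I)).

Definition lost : {set {set V}} :=
  [set E in edges G | [set pi x | x in E] \notin edges G0].

Lemma card_edges_preserved_lost : #|edges G| = preserved G G0 pi + #|lost|.
Proof.
rewrite /preserved /lost !setIdE -(cardsID [set E : {set V} | [set pi x | x in E] \in edges G0]).
by congr (_ + _); apply: eq_card => E; rewrite !inE andbC.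
Qed.

Lemma lost_adj (u v : V) : G u v -> ~~ G0 (pi u) (pi v) -> [set u; v] \in lost.
Proof.
move=> Guv NG0; rewrite inE; apply/andP; split; first by apply/imsetP; exists (u, v); rewrite ?inE.
rewrite imsetU1 imset_set1; apply/negP => /imsetP [[a b]]; rewrite inE /= => Gab E.
case: (eq_set2 E) => -[Ea Eb]; subst a b; first by rewrite Gab in NG0.
by rewrite adjC Gab in NG0.
Qed.

Definition lost_ends : {set V} := [set u | [exists v, G u v && ~~ G0 (pi u) (pi v)]].

Lemma card_lost_ends : (#|lost_ends| <= 2 * #|lost|)%N.
Proof.
pose e (u : V) := [set u; odflt u [pick v | G u v && ~~ G0 (pi u) (pi v)]].
have e_lost u : u \in lost_ends -> e u \in lost.
  rewrite inE => /existsP [v Hv]; rewrite /e.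
  by case: pickP => [w /andP[]|N]; [exact: lost_adj | rewrite N in Hv].
rewrite -sum1_card (partition_big e (mem lost)) //= mulnC -sum_nat_const.
apply: leq_sum => E HE; rewrite sum1dep_card.
apply: (@leq_trans #|E|).
  by apply/subset_leq_card/subsetP => u; rewrite inE => /andP[_ /eqP <-]; rewrite set21.
by move: HE; rewrite inE => /andP[/imsetP [[a b] _ ->] _]; rewrite cards2; case: (_ != _).
Qed.

(* A constraint fails to be nice either because one of its clique vertices
   ends a lost edge or because one of them is sent outside the constraint
   vertices; the latter is charged to the preimage under pi of that vertex. *)
Lemma card_not_nice :
  (m <= #|[set c | nice I pi c]| + 2 * #|lost| + #|[set v : V | ~~ is_con (val v)]|)%N.
Proof.
set B1 := [set c : 'I_m | ~~ [forall u, [forall v, in_clique c u ==> G u v ==>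
           G0 (pi u) (pi v)]]].
set B2 := [set c : 'I_m | ~~ [forall u, in_clique c u ==> is_con (val (pi u))]].
have B12 : (#|~: [set c | nice I pi c]| <= #|B1| + #|B2|)%N.
  apply/(leq_trans _ (leq_card_setU B1 B2).1)/subset_leq_card/subsetP => c.
  by rewrite !inE /nice negb_and.
have B1_ends : (#|B1| <= #|lost_ends|)%N.
  rewrite -(card_imset _ (@Some_inj _)).
  apply/(leq_trans _ (leq_imset_card (fun u : V => con_of (val u)) _))/subset_leq_card.
  apply/subsetP => _ /imsetP [c + ->]; rewrite inE => /forallPn [u /forallPn [v]].
  rewrite !negb_imply => /and3P[Qu Guv NG0].
  by apply/imsetP; exists u; [rewrite inE; apply/existsP; exists v; rewrite Guv | move/eqP: Qu].
have B2_out : (#|B2| <= #|[set v : V | ~~ is_con (val v)]|)%N.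
  rewrite -(card_imset _ (@Some_inj _)).
  apply/(leq_trans _ (leq_imset_card (fun v : V => con_of (val ((pi^-1)%g v))) _)).
  apply/subset_leq_card/subsetP => _ /imsetP [c + ->]; rewrite inE => /forallPn [u].
  rewrite negb_imply => /andP[Qu Nu].
  by apply/imsetP; exists (pi u); rewrite ?inE // permK; move/eqP: Qu.
apply: (@leq_trans (#|[set c | nice I pi c]| + #|~: [set c | nice I pi c]|)).
  by rewrite cardsC card_ord.
rewrite -addnA leq_add2l; apply: (leq_trans B12); apply: leq_add => //.
exact: leq_trans B1_ends card_lost_ends.
Qed.

End Lost.

Definition gadget_loc (t : nat) (p : 'I_t -> nat) : finType :=
  (Hgrp p + 'I_t * Hgrp p + 'I_t * Hgrp p * 'I_t + 'I_t * Hgrp p * bool)%type.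

Section Edges.
Variables (t : nat) (p : 'I_t -> nat) (k n m : nat) (psi : {set Ktup p k}).
Local Notation K := (Ktup p k).
Local Notation V := (Vert n m psi).
Local Notation VR := (Vraw p k n m).
Local Notation L := (gadget_loc p).

Definition gadget_pos (v : VR) : option ('I_n * L) :=
  match v with
  | inl (inl (inl (inl (x, b)))) => Some (x, inl (inl (inl b)))
  | inl (inl (inl (inr (x, i, b)))) => Some (x, inl (inl (inr (i, b))))
  | inl (inl (inr (x, i, b, j))) => Some (x, inl (inr (i, b, j)))
  | inl (inr (x, i, r, f)) => Some (x, inr (i, r, f))
  | inr _ => None
  end.

Lemma gadget_pos_inj (a b : VR) : ~~ is_con a -> gadget_pos a = gadget_pos b -> a = b.
Proof.
case: a => [[[[[x1 b1]|[[x1 i1] b1]]|[[[x1 i1] b1] j1]]|[[[x1 i1] r1] f1]]|[c1 s1]];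
case: b => [[[[[x2 b2]|[[x2 i2] b2]]|[[[x2 i2] b2] j2]]|[[[x2 i2] r2] f2]]|[c2 s2]] //=;
by move=> _ []; intros; subst.
Qed.

Lemma gadget_posP (a : VR) : ~~ is_con a -> exists xl, gadget_pos a = Some xl.
Proof.
by case: a => [[[[[x1 b1]|[[x1 i1] b1]]|[[[x1 i1] b1] j1]]|[[[x1 i1] r1] f1]]|[c1 s1]] //=;
  eexists.
Qed.

Lemma arc_same_gadget (I : instance p k n m) (a b : VR) : ~~ is_con a -> ~~ is_con b ->
  Defs.arc I a b -> omap fst (gadget_pos a) = omap fst (gadget_pos b).
Proof.
case: a => [[[[[x1 b1]|[[x1 i1] b1]]|[[[x1 i1] b1] j1]]|[[[x1 i1] r1] [|]]]|[c1 s1]];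
case: b => [[[[[x2 b2]|[[x2 i2] b2]]|[[[x2 i2] b2] j2]]|[[[x2 i2] r2] [|]]]|[c2 s2]] //=;
by move=> _ _ /andP[/eqP-> _].
Qed.

Lemma adj_same_gadget (I : instance p k n m) (u v : V) :
  ~~ is_con (val u) -> ~~ is_con (val v) -> adjG I u v ->
  omap fst (gadget_pos (val u)) = omap fst (gadget_pos (val v)).
Proof.
move=> Cu Cv /orP[] A; first exact: arc_same_gadget A.
by symmetry; apply: arc_same_gadget A.
Qed.

Lemma card_gadget_vertices : (#|[set v : V | ~~ is_con (val v)]| <= (n * #|{: L}|).+1)%N.
Proof.
have -> : (n * #|{: L}|).+1 = #|{: option ('I_n * L)}| by rewrite card_option card_prod card_ord.
rewrite -(card_in_imset (f := fun v : V => gadget_pos (val v))); first exact: max_card.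
by move=> u v; rewrite !inE => Cu _ E; apply/val_inj/gadget_pos_inj.
Qed.

(* An edge at a constraint vertex u is determined by the constraint and tuple of
   u together with either the tuple of the other end or its position in the
   scope; an edge inside a gadget by the positions of its two ends. *)
Definition con_arc_code (I : instance p k n m) (x : V * V) :
  (option 'I_m * K * (K + option 'I_k))%type :=
  (con_of (val x.1), (if val x.1 is inr (_, s) then s else Kzero p k),
   if val x.2 is inr (_, s') then inl s'
   else inr (if con_of (val x.1) is Some c then
               [pick l | var_of (val x.2) == Some ((I c).1 l)] else None)).

Definition gadget_arc_code (x : V * V) : (option ('I_n * L) * option L)%type :=
  (gadget_pos (val x.1), omap snd (gadget_pos (val x.2))).

Lemma pick_scope (f : 'I_k -> 'I_n) l : injective f ->
  [pick l' | Some (f l) == Some (f l')] = Some l.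
Proof.
move=> f_inj; case: pickP => [l' /eqP [/f_inj ->] //|N].
by have := N l; rewrite eqxx.
Qed.

Lemma con_arc_code_inj (I : instance p k n m) : valid_instance I ->
  {in [set x : V * V | adjG I x.1 x.2 && is_con (val x.1)] &, injective (con_arc_code I)}.
Proof.
move=> VI; have scopeI c0 : injective (I c0).1.
  by apply/injectiveP; move/forallP: VI; apply.
move=> [u v] [u' v']; rewrite !inE /= => /andP[Guv Cu] /andP[Guv' Cu'].
case Eu: (val u) Cu => [//|[c s]] _; case Eu': (val u') Cu' => [//|[c' s']] _.
rewrite /con_arc_code /= Eu Eu' /= => -[Ec Es Ev]; subst c' s'.
have Euu : u' = u by apply: val_inj; rewrite Eu Eu'.
subst u'; congr (_, _).
case: (adj_conP Eu Guv) => [[s1 Hv]|[l1 Hv]];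
  case: (adj_conP Eu Guv') => [[s2 Hv']|[l2 Hv']]; move: Ev; rewrite Hv Hv' //=.
  by case=> Es; apply: val_inj; rewrite Hv Hv' Es.
by rewrite !pick_scope // => -[El]; apply: val_inj; rewrite Hv Hv' El.
Qed.

Lemma gadget_arc_code_inj (I : instance p k n m) :
  {in [set x : V * V | adjG I x.1 x.2 && ~~ is_con (val x.1) && ~~ is_con (val x.2)] &,
   injective gadget_arc_code}.
Proof.
move=> [u v] [u' v']; rewrite !inE /= => /andP[/andP[Guv Cu] Cv] /andP[/andP[Guv' Cu'] Cv'].
rewrite /gadget_arc_code /= => -[Eg Eg2].
have Euu : u = u' by apply/val_inj/gadget_pos_inj.
subst u'; congr (_, _); apply/val_inj/gadget_pos_inj => //.
have G1 := adj_same_gadget Cu Cv Guv; have G2 := adj_same_gadget Cu Cv' Guv'.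
case: (gadget_posP Cv) => [[xv lv] Ev]; case: (gadget_posP Cv') => [[xv' lv'] Ev'].
by move: G1 G2 Eg2; rewrite Ev Ev' /= => -> [->] [->].
Qed.

Lemma card_edges (I : instance p k n m) : valid_instance I ->
  (#|edges (@adjG _ _ _ _ _ psi I)| <=
   2 * (m.+1 * #|{: K}| * (#|{: K}| + k.+1)) + (n * #|{: L}|).+1 * (#|{: L}|).+1)%N.
Proof.
move=> VI.
set A1 := [set x : V * V | adjG I x.1 x.2 && is_con (val x.1)].
set A2 := [set x : V * V | adjG I x.1 x.2 && is_con (val x.2)].
set A3 := [set x : V * V | adjG I x.1 x.2 && ~~ is_con (val x.1) && ~~ is_con (val x.2)].
have A123 : (#|[set x : V * V | adjG I x.1 x.2]| <= #|A1| + #|A2| + #|A3|)%N.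
  apply: (@leq_trans #|A1 :|: A2 :|: A3|).
    apply/subset_leq_card/subsetP => x; rewrite !inE => -> /=.
    by case: (is_con _); case: (is_con _).
  by apply: (leq_trans (leq_card_setU _ _).1); rewrite leq_add2r (leq_card_setU _ _).1.
have A1_card : (#|A1| <= m.+1 * #|{: K}| * (#|{: K}| + k.+1))%N.
  have -> : (m.+1 * #|{: K}| * (#|{: K}| + k.+1))%N =
            #|{: option 'I_m * K * (K + option 'I_k)}|.
    by rewrite !card_prod card_sum !card_option !card_ord.
  by rewrite -(card_in_imset (con_arc_code_inj VI)) max_card.
have A21 : (#|A2| <= #|A1|)%N.
  have swap_inj : injective (fun x : V * V => (x.2, x.1)) by move=> [a b] [c d] [-> ->].
  rewrite -(card_imset A2 swap_inj); apply/subset_leq_card/subsetP => x.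
  by case/imsetP => y; rewrite !inE => /andP[Gy Cy] -> /=; rewrite Cy adjC Gy.
have A3_card : (#|A3| <= (n * #|{: L}|).+1 * (#|{: L}|).+1)%N.
  have -> : ((n * #|{: L}|).+1 * (#|{: L}|).+1)%N = #|{: option ('I_n * L) * option L}|.
    by rewrite !card_prod !card_option card_prod card_ord.
  by rewrite -(card_in_imset (@gadget_arc_code_inj I)) max_card.
rewrite /edges; apply: (leq_trans (leq_imset_card _ _)); apply: (leq_trans A123).
by rewrite mul2n -addnn; apply: leq_add => //; apply: leq_add => //; apply: leq_trans A21 _.
Qed.

End Edges.

Lemma card_exists_le (A B : finType) (P : A -> B -> bool) :
  (#|[set b | [exists a, P a b]]| <= \sum_a #|[set b | P a b]|)%N.
Proof.
apply: (@leq_trans (\sum_b \sum_a (P a b : nat))).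
  rewrite -sum1_card big_mkcond /=; apply: leq_sum => b _; rewrite inE.
  by case: existsP => [[a Pab]|//]; rewrite (bigD1 a) //= Pab leq_addr.
rewrite exchange_big; apply: leq_sum => a _.
rewrite -sum1_card [X in (_ <= X)%N]big_mkcond /=.
by apply/eq_leq; apply: eq_bigr => b _; rewrite inE.
Qed.

Lemma leq_exp_base (a b e : nat) : (a <= b)%N -> (a ^ e <= b ^ e)%N.
Proof. by move=> ab; elim: e => // e IH; rewrite !expnS leq_mul. Qed.

Section Count.
Variables (t : nat) (p : 'I_t -> nat) (k n m : nat) (psi : {set Ktup p k}).
Local Notation H := (Hgrp p).
Local Notation K := (Ktup p k).

Definition nsat (h : 'I_n -> H) (I : instance p k n m) : nat := #|[set c | sat psi h (I c)]|.

Definition nscopes : nat := #|[set f : {ffun 'I_k -> 'I_n} | injectiveb f]|.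

Lemma sum_weight_shift (b : K) (w : nat) :
  \sum_(a : K) w ^ (Kadd b a \in psi) = (#|{: K}| - #|psi| + w * #|psi|)%N.
Proof.
have card_in : #|[pred a | Kadd b a \in psi]| = #|psi|.
  by rewrite -(card_preimset psi (@KaddI _ _ _ b)); apply: eq_card => a; rewrite !inE.
have E1 : \sum_(a | Kadd b a \in psi) w ^ (Kadd b a \in psi) = (w * #|psi|)%N.
  by rewrite (eq_bigr (fun _ => w)) => [|a ->//]; rewrite sum_nat_const card_in mulnC.
have E0 : \sum_(a | Kadd b a \notin psi) w ^ (Kadd b a \in psi) = (#|{: K}| - #|psi|)%N.
  rewrite (eq_bigr (fun _ => 1%N)) => [|a /negbTE ->//]; rewrite sum_nat_const muln1.
  by rewrite -card_in -(cardC [pred a | Kadd b a \in psi]) addKn; apply: eq_card => a; rewrite !inE.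
by rewrite (bigID (fun a => Kadd b a \in psi)) /= E1 E0 addnC.
Qed.

(* Constraints are independent, so the weight factorises over them; summing the
   weight of one constraint over its shifts a uses that a |-> s + a is a bijection. *)
Lemma sum_weight_nsat (h : 'I_n -> H) (w : nat) :
  \sum_(I : instance p k n m | valid_instance I) w ^ nsat h I
  = (nscopes * (#|{: K}| - #|psi| + w * #|psi|)) ^ m.
Proof.
pose F (C : constr p k n) := ((injectiveb C.1 : nat) * w ^ sat psi h C)%N.
rewrite big_mkcond /=.
transitivity (\sum_(I : instance p k n m) \prod_(c < m) F (I c)).
  apply: eq_bigr => I _; rewrite big_split /= -expn_sum.
  have -> : \sum_(c < m) sat psi h (I c) = nsat h I.
    by rewrite /nsat -sum1_card [RHS]big_mkcond /=; apply: eq_bigr => c _; rewrite inE.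
  rewrite /valid_instance; case: (boolP [forall c, _]) => [/forallP Hall | /forallPn [c0 Nc0]].
    by rewrite big1 ?mul1n // => c _; rewrite Hall.
  by rewrite (bigD1 c0) //= (negbTE Nc0) !mul0n.
rewrite -(bigA_distr_bigA (fun (c : 'I_m) (C : constr p k n) => F C)) /=.
rewrite prod_nat_const card_ord; congr (_ ^ _)%N.
rewrite -(pair_bigA _ (fun f a => F (f, a))) /= /nscopes -sum1_card big_distrl /=.
rewrite [RHS]big_mkcond /=; apply: eq_bigr => f _; rewrite inE /F /= -big_distrr /=.
by rewrite /sat /= sum_weight_shift; case: (injectiveb f); rewrite ?mul1n ?mul0n.
Qed.

Lemma card_valid : #|[set I : instance p k n m | valid_instance I]| = (nscopes * #|{: K}|) ^ m.
Proof.
have := sum_weight_nsat (fun _ => Hzero p) 1; rewrite mul1n subnK ?max_card // => <-.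
by rewrite -sum1_card [RHS]big_mkcond [LHS]big_mkcond /=; apply: eq_bigr => I _; rewrite inE exp1n.
Qed.

Lemma card_valid_gt0 : (k <= n)%N -> (0 < #|[set I : instance p k n m | valid_instance I]|)%N.
Proof.
move=> kn; apply/card_gt0P; exists [ffun c => ([ffun l => widen_ord kn l], Kzero p k)].
rewrite inE; apply/forallP => c; rewrite ffunE /=; apply/injectiveP => a b.
by rewrite !ffunE => /(congr1 val) /= /val_inj.
Qed.

Section QuarterDensity.
Variable d : nat.
Hypotheses (m4d : m = (4 * d)%N) (psi_half : (2 * #|psi| <= #|{: K}|)%N).

(* Markov's inequality for 2^nsat: each constraint is satisfied with
   probability at most 1/2, so E[2^nsat] <= (3/2)^m, while 2^nsat >= 2^(3d). *)
Lemma card_many_sat (h : 'I_n -> H) :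
  (#|[set I : instance p k n m | valid_instance I && (3 * d <= nsat h I)]| * 128 ^ d
   <= 81 ^ d * #|[set I : instance p k n m | valid_instance I]|)%N.
Proof.
set S := [set I | _ && _].
have markov : (#|S| * 2 ^ (3 * d) <= (nscopes * (#|{: K}| - #|psi| + 2 * #|psi|)) ^ m)%N.
  rewrite -(sum_weight_nsat h) -sum_nat_const big_mkcond [X in (_ <= X)%N]big_mkcond /=.
  apply: leq_sum => I _; rewrite inE.
  by case: (valid_instance I) => //=; case: ifP => // H3; rewrite leq_pexp2l.
have -> : (128 ^ d = 2 ^ (3 * d) * 2 ^ m)%N by rewrite m4d -expnD -mulnDl expnM.
have -> : (81 ^ d = 3 ^ m)%N by rewrite m4d expnM.
rewrite mulnA card_valid -expnMn; apply: leq_trans (leq_mul markov (leqnn _)) _.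
rewrite -expnMn; apply: leq_exp_base.
have := max_card psi; rewrite -mulnA [3 * _]mulnCA leq_mul2l; lia.
Qed.

Lemma card_some_many_sat :
  (#|[set I : instance p k n m | valid_instance I &&
        [exists h : {ffun 'I_n -> H}, 3 * d <= nsat h I]]| * 128 ^ d
   <= #|{: H}| ^ n * 81 ^ d * #|[set I : instance p k n m | valid_instance I]|)%N.
Proof.
have -> : [set I | valid_instance I && [exists h : {ffun 'I_n -> H}, 3 * d <= nsat h I]]
        = [set I | [exists h : {ffun 'I_n -> H}, valid_instance I && (3 * d <= nsat h I)]].
  apply/setP => I; rewrite !inE.
  apply/andP/existsP => [[VI /existsP [h Hh]]|[h /andP[VI Hh]]]; first by exists h; rewrite VI.
  by split=> //; apply/existsP; exists h.
apply: leq_trans (leq_mul (card_exists_le _) (leqnn _)) _.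
have -> : (#|{: H}| ^ n = #|{: {ffun 'I_n -> H}}|)%N by rewrite card_ffun card_ord.
rewrite big_distrl /= -mulnA -sum_nat_const.
by apply: leq_sum => h _; apply: card_many_sat.
Qed.

End QuarterDensity.
End Count.

Section Deterministic.
Local Open Scope ring_scope.
Variables (R : realType) (t : nat) (p : 'I_t -> nat) (k n m : nat) (psi : {set Ktup p k}).
Variables (I : instance p k n m) (delta : R).
Local Notation V := (Vert n m psi).
Local Notation K := (Ktup p k).
Local Notation L := (gadget_loc p).
Local Notation G := (@adjG _ _ _ _ _ psi I).
Local Notation G0 := (@adjG _ _ _ _ _ psi (zero_instance I)).

Lemma lost_le_GI_gap : ~~ (GI_instance R psi I < 1 - delta) ->
  exists pi : {perm V}, (#|lost I pi|)%:R <= delta * (maxn #|edges G| #|edges G0|)%:R.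
Proof.
rewrite /GI_instance /GI; set M := maxn _ _.
have [M0|M0] := eqVneq M 0%N.
  exists 1%g; rewrite M0 mulr0 lern0 -leqn0 -M0 (leq_trans _ (leq_maxl _ _)) //.
  by rewrite subset_leq_card // /lost setIdE subsetIl.
have [|pi ->] := bigop.eq_bigmax (preserved G G0); first by apply/card_gt0P; exists 1%g.
rewrite -leNgt ler_pdivlMr ?ltr0n ?lt0n // => large; exists pi.
have : (#|edges G| <= M)%N by apply: leq_maxl.
rewrite (card_edges_preserved_lost I pi) -(ler_nat R) natrD; lra.
Qed.

Definition edge_bound : nat :=
  (2 * (m.+1 * #|{: K}| * (#|{: K}| + k.+1)) + (n * #|{: L}|).+1 * (#|{: L}|).+1)%N.

Lemma nsat_large_of_GI :
  valid_instance I -> Kzero p k \in psi -> balanced psi -> pairwise_independent psi ->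
  0 <= delta -> ~~ (GI_instance R psi I < 1 - delta) ->
  exists h : {ffun 'I_n -> Hgrp p},
    m%:R <= (nsat psi h I)%:R + 2 * delta * edge_bound%:R + (n * #|{: L}|).+1%:R.
Proof.
move=> VI psi0 bal pw delta0 /lost_le_GI_gap [pi lost_small].
exists [ffun x => read_off pi x].
have nice_sat_le : (#|[set c | nice I pi c]| <= nsat psi [ffun x => read_off pi x] I)%N.
  apply/subset_leq_card/subsetP => c; rewrite !inE => nice_c.
  have -> : sat psi [ffun x => read_off pi x] (I c) = sat psi (read_off pi) (I c).
    by rewrite /sat; congr (Kadd _ _ \in psi); apply/ffunP => l; rewrite !ffunE.
  exact: nice_sat.
have VI0 : valid_instance (zero_instance I).
  by apply/forallP => c; rewrite /zero_instance ffunE /=; move/forallP: VI; apply.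
have max_edges : (maxn #|edges G| #|edges G0|)%:R <= edge_bound%:R :> R.
  by rewrite ler_nat geq_max !card_edges.
have gadget : #|[set v : V | ~~ is_con (val v)]|%:R <= (n * #|{: L}|).+1%:R :> R.
  by rewrite ler_nat card_gadget_vertices.
have count : m%:R <= #|[set c | nice I pi c]|%:R + 2 * #|lost I pi|%:R
                     + #|[set v : V | ~~ is_con (val v)]|%:R :> R.
  by rewrite -natrM -!natrD ler_nat card_not_nice.
have : delta * (maxn #|edges G| #|edges G0|)%:R <= delta * edge_bound%:R by rewrite ler_wpM2l.
move: nice_sat_le; rewrite -(ler_nat R); lra.
Qed.

End Deterministic.

Lemma expn81_le_expn128 (a j : nat) : (2 * a <= j)%N -> (2 * a * 81 ^ (2 * j) <= 128 ^ (2 * j))%N.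
Proof.
move=> aj; rewrite !expnM; apply: (@leq_trans (2 ^ j * (81 ^ 2) ^ j)).
  by rewrite leq_mul2r (leq_trans aj (ltnW (ltn_expl j (isT : 1 < 2)))) orbT.
by rewrite -expnMn; apply: leq_exp_base; rewrite !expnS expn0; lia.
Qed.

Local Open Scope ring_scope.

Lemma ratio_ge_one_sub (R : realType) (g b v n : nat) (eps : R) : 0 < eps -> eps^-1 < n%:R ->
  (v <= g + b)%N -> (b * 2 ^ n <= v)%N -> (0 < v)%N -> 1 - eps <= g%:R / v%:R.
Proof.
move=> eps0 n_large vgb bv v0.
have n_pos : 0 < n%:R :> R by apply: lt_trans n_large; rewrite invr_gt0.
have b_small : b%:R * n%:R <= v%:R :> R.
  rewrite -natrM ler_nat (leq_trans _ bv) // leq_mul2l ltnW ?orbT //.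
  by rewrite ltn_expl.
have eps_n : 1 < eps * n%:R by rewrite -(ltr_pM2l eps0) mulfV ?gt_eqF in n_large.
rewrite ler_pdivlMr ?ltr0n //.
have : v%:R <= g%:R + b%:R :> R by rewrite -natrD ler_nat.
have : 0 <= b%:R :> R by [].
nra.
Qed.

Section Constants.
Variables (t : nat) (p : 'I_t -> nat) (k : nat) (psi : {set Ktup p k}).
Local Notation H := (Hgrp p).
Local Notation K := (Ktup p k).
Local Notation L := (gadget_loc p).

(* With j := density_unit, B := edge_rate, m = 8 j n and delta = 1 / (16 B),
   lost edges spoil at most 2 delta (m B) = m/8 constraints and gadget vertices
   at most n (|L| + 1) <= m/8, so 3m/4 = 3 (2 j n) constraints stay satisfied;
   j >= 2 |H| makes the first moment bound decay like 2^-n. *)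
Definition edge_rate : nat := (4 * #|{: K}| * (#|{: K}| + k.+1) + (#|{: L}|).+1 ^ 2)%N.
Definition density_unit : nat := (2 * #|{: H}| + (#|{: L}|).+1)%N.
Definition density : nat := (8 * density_unit)%N.
Definition gap (R : realType) : R := (16 * edge_rate)%:R^-1.

Lemma edge_bound_le n m : (0 < n)%N -> (n <= m)%N -> (edge_bound p k n m <= m * edge_rate)%N.
Proof.
rewrite /edge_bound /edge_rate -!mulnA; move: (_ * (_ + _))%N #|{: L}| => X Y n0 nm.
nia.
Qed.

Lemma gap_gt0 (R : realType) : 0 < gap R.
Proof. by rewrite invr_gt0 ltr0n muln_gt0 /edge_rate addn_gt0 expn_gt0 orbT. Qed.

Lemma nsat_large_density (R : realType) n (I : instance p k n (density * n)) :
  (0 < n)%N -> valid_instance I -> Kzero p k \in psi -> balanced psi ->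
  pairwise_independent psi -> ~~ (GI_instance R psi I < 1 - gap R) ->
  exists h : {ffun 'I_n -> H}, (3 * (2 * density_unit * n) <= nsat psi h I)%N.
Proof.
move=> n0 VI psi0 bal pw GI_large.
have [h count] := nsat_large_of_GI VI psi0 bal pw (ltW (gap_gt0 R)) GI_large.
exists h; move: count; rewrite -(ler_nat R).
have n_m : (n <= density * n)%N by rewrite leq_pmull // muln_gt0 addn_gt0 orbT.
have edges : (edge_bound p k n (density * n))%:R
             <= (density * n)%:R * edge_rate%:R :> R.
  by rewrite -natrM ler_nat edge_bound_le.
have gadget : 8 * (n * #|{: L}|).+1%:R <= (density * n)%:R :> R.
  rewrite -natrM ler_nat /density /density_unit; nia.
have rate : gap R * edge_rate%:R = 16^-1.
  rewrite /gap natrM invfM -mulrA mulVf ?mulr1 // pnatr_eq0 /edge_rate.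
  by rewrite addn_eq0 expn_eq0 andbF.
have : gap R * (edge_bound p k n (density * n))%:R <= (density * n)%:R / 16.
  by apply: le_trans (ler_wpM2l (ltW (gap_gt0 R)) edges) _; rewrite mulrCA rate.
have Em : (density * n)%:R = 4 * (2 * density_unit * n)%:R :> R.
  by rewrite -natrM /density; congr (_ %:R); lia.
rewrite Em in gadget *; rewrite (natrM _ 3); lra.
Qed.

Lemma card_sat_many_density n : (2 * #|psi| <= #|{: K}|)%N ->
  (#|[set I : instance p k n (density * n) | valid_instance I &&
       [exists h : {ffun 'I_n -> H}, 3 * (2 * density_unit * n) <= nsat psi h I]]| * 2 ^ n
   <= #|[set I : instance p k n (density * n) | valid_instance I]|)%N.
Proof.
move=> psi_half; set d := (2 * density_unit * n)%N.
have m4d : (density * n = 4 * d)%N by rewrite /d /density; nia.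
have := card_some_many_sat n m4d psi_half.
have pos : (0 < #|{: H}| ^ n * 81 ^ d)%N.
  by rewrite muln_gt0 !expn_gt0 andbT; apply/orP; left; apply/card_gt0P; exists (Hzero p).
move=> many; rewrite -(leq_pmul2r pos) [X in (_ <= X)%N]mulnC; apply: leq_trans many.
rewrite -mulnA leq_mul2l mulnA -expnMn /d !(expnM _ (2 * density_unit)) -expnMn.
apply/orP; right; apply/leq_exp_base/expn81_le_expn128.
by rewrite /density_unit leq_addr.
Qed.

End Constants.

Theorem lemma7p4 (R : realType) (t : nat) (p : 'I_t -> nat) (k : nat)
    (psi : {set Ktup p k}) :
  (forall i, (1 < p i)%N) ->
  (3 <= k)%N ->
  is_subgroup psi ->
  balanced psi ->
  pairwise_independent psi ->
  psi != setT ->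
  exists delta c : R, 0 < delta /\ 0 < c /\
    forall eps : R, 0 < eps -> exists N : nat, forall n : nat, (N <= n)%N ->
      1 - eps <=
        Pr_instance R (n := n) (m := Num.truncn (c * n%:R))
          (fun I => GI_instance R psi I < 1 - delta).
Proof.
move=> _ _ subgroup bal pw proper; have psi0 : Kzero p k \in psi by case: subgroup.
exists (gap p k R), (density p)%:R; split; first exact: gap_gt0.
split; first by rewrite ltr0n /density muln_gt0 /density_unit addn_gt0 orbT.
move=> eps eps0; exists (maxn k (Num.truncn eps^-1).+1) => n; rewrite geq_max => /andP[kn n_large].
rewrite -natrM natrK /Pr_instance.
set bad := [set I : instance p k n (density p * n) | valid_instance I &&
  [exists h : {ffun 'I_n -> Hgrp p}, (3 * (2 * density_unit p * n) <= nsat psi h I)%N]].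
apply: (ratio_ge_one_sub (n := n) (b := #|bad|)) => //.
- by apply: lt_le_trans (truncnS_gt _) _; rewrite ler_nat.
- apply/(leq_trans _ (leq_card_setU _ _).1)/subset_leq_card/subsetP => I; rewrite !inE.
  case: (boolP (valid_instance I)) => //= VI.
  case: (boolP (GI_instance R psi I < 1 - gap p k R)) => //= GI_large.
  have [h Hh] := nsat_large_density (leq_ltn_trans (leq0n _) n_large) VI psi0 bal pw GI_large.
  by move=> _; apply/existsP; exists h.
- exact/card_sat_many_density/proper_subgroup_half.
- exact: card_valid_gt0.
Qed.
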